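(* Let $\mathcal{S}=[-\pi,\pi]$ with periodic identification of the endpoints. Let $\rho^{\mathrm d}:\mathcal{S}\times\mathbb{R}_{\ge0}\to\mathbb{R}_{\ge0}$ be smooth and periodic in $x$ with $\|\rho^{\mathrm d}(\cdot,t)\|_2\le M$ and $\|\rho^{\mathrm d}_x(\cdot,t)\|_2\le L$ for all $t\ge0$. Let $d:\mathcal{S}\times\mathbb{R}_{\ge0}\to\mathbb{R}$ satisfy $d(-\pi,t)=d(\pi,t)$ and $\|d(\cdot,t)\|_\infty\le D_1$, $\|d_x(\cdot,t)\|_\infty\le D_2$ for all $t\ge0$, with constants $D_1,D_2>0$. Let $K_{\mathrm p}>0$ and let $e$ be an $x$-periodic solution of $$e_t(x,t)=-K_{\mathrm p}e(x,t)+\big[(\rho^{\mathrm d}(x,t)-e(x,t))\,d(x,t)\big]_x.$$ Then for every $\kappa$ with $D_2<\kappa<+\infty$, if $2K_{\mathrm p}>\kappa$, the squared error norm $\|e(\cdot,t)\|_2^2$ remains bounded and $$\limsup_{t\to\infty}\|e(\cdot,t)\|_2\le\frac{2LD_1+2MD_2}{\kappa-D_2}.$$ In particular, the upper bound on the steady-state error can be made arbitrarily small by choosing $\kappa$ sufficiently large.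
   Context: Norms: $\|h(\cdot,t)\|_p=(\int_{\mathcal{S}}|h(x,t)|^p\,dx)^{1/p}$, $\|h(\cdot,t)\|_\infty=\operatorname{ess\,sup}_{\mathcal{S}}|h(x,t)|$. Subscripts $t,x$ denote partial derivatives. Background: this error equation arises for $e=\rho^{\mathrm d}-\rho$ when a multiagent density $\rho$ on the ring obeys $\rho_t+[\rho((f*\rho)+d)]_x=q$ with a velocity perturbation $d$ and control $q=K_{\mathrm p}e-[e(f*\rho^{\mathrm d})]_x-[\rho(f*e)]_x$, while $\rho^{\mathrm d}_t+[\rho^{\mathrm d}(f*\rho^{\mathrm d})]_x=0$; here $*$ is circular convolution on $\mathcal{S}$ and $f$ a periodic interaction kernel. *)

From Stdlib Require Import Reals Lra.
From Coquelicot Require Import Coquelicot.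
Open Scope R_scope.

(* Functions on the ring S = [-pi,pi] (endpoints identified) times time are
   modelled as f : R -> R -> R (f x t), 2*pi-periodic in the space variable x. *)
Definition periodic_x (f : R -> R -> R) : Prop :=
  forall x t, f (x + 2 * PI) t = f x t.

Definition partial_x (f : R -> R -> R) : R -> R -> R :=
  fun x t => Derive (fun y => f y t) x.
Definition partial_t (f : R -> R -> R) : R -> R -> R :=
  fun x t => Derive (fun s => f x s) t.

Fixpoint iter_partial (l : list bool) (f : R -> R -> R) : R -> R -> R :=
  match l with
  | nil => f
  | cons b l' => (if b then partial_x else partial_t) (iter_partial l' f)
  end.

Definition smooth_on (U : R -> R -> Prop) (f : R -> R -> R) : Prop :=
  forall (l : list bool) x t, U x t ->
    ex_derive (fun y => iter_partial l f y t) x /\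
    ex_derive (fun s => iter_partial l f x s) t /\
    continuous (fun p : R * R => iter_partial l f (fst p) (snd p)) (x, t).

Definition norm2 (h : R -> R) : R := sqrt (RInt (fun x => (h x) ^ 2) (- PI) PI).

Definition limsup_le (g : R -> R) (c : R) : Prop :=
  forall eps : R, 0 < eps -> exists T : R, forall t, T <= t -> g t <= c + eps.

From Stdlib Require Import Reals Lra Psatz.
From Coquelicot Require Import Coquelicot.
Open Scope R_scope.

(* Energy method for E(t) = ||e(.,t)||_2^2.  For t > 0, E' = int 2 e e_t.  Adding the
   vanishing integral of the periodic flux (e^2 d)_x cancels the transport term
   -2 e e_x d of the equation, and the sup bounds on d, d_x together with Cauchy-Schwarz
   give E' <= -(2 Kp - D2) E + 2 (L D1 + M D2) sqrt E.  Completing the square turns this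
   into E' <= -a E + a z^2 with a = (2 Kp - D2) / 2 and z = 2 (L D1 + M D2) / (2 Kp - D2),
   and Gronwall yields boundedness and limsup sqrt E <= z, which is below the claimed
   bound since 2 Kp - D2 > kappa - D2.  On [0, delta], where e is only continuous,
   E is bounded by uniform continuity of e on [-pi, pi] x [0, delta]. *)

(* Coquelicot states these (and the [RInt] lemmas below) with the abstract [plus], [mult],
   [scal]; [apply] and [rewrite] do not see through them to [Rplus] and [Rmult]. *)
Lemma continuous_Rplus_comp {T : UniformSpace} (f g : T -> R) p :
  continuous f p -> continuous g p -> continuous (fun y => f y + g y) p.
Proof. exact (continuous_plus f g p). Qed.

Lemma continuous_Rmult_comp {T : UniformSpace} (f g : T -> R) p :
  continuous f p -> continuous g p -> continuous (fun y => f y * g y) p.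
Proof. exact (continuous_mult f g p). Qed.

Lemma continuous_Rpow2_comp {T : UniformSpace} (f : T -> R) p :
  continuous f p -> continuous (fun y => f y ^ 2) p.
Proof.
  intros Hf.
  exact (continuous_Rmult_comp f (fun y => f y * 1) p Hf
           (continuous_Rmult_comp f _ p Hf (continuous_const 1 p))).
Qed.

Ltac split_continuous :=
  repeat match goal with
  | |- continuous (fun _ => ?c) _ => apply continuous_const
  | |- continuous (fun y => @?f y ^ 2) _ => apply continuous_Rpow2_comp
  | |- continuous (fun y => @?f y + @?g y) _ => apply continuous_Rplus_comp
  | |- continuous (fun y => @?f y * @?g y) _ => apply continuous_Rmult_comp
  | |- continuous (fun y => Rabs (@?f y)) _ => apply continuous_Rabs_comp
  end.

Lemma continuous_slice_fst (F : R -> R -> R) x t :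
  continuous (fun p : R * R => F (fst p) (snd p)) (x, t) -> continuous (fun y => F y t) x.
Proof.
  exact (continuous_comp_2 (fun y => y) (fun _ => t) F x
           (continuous_id x) (continuous_const t x)).
Qed.

Lemma continuous_swap (F : R -> R -> R) x t :
  continuous (fun p : R * R => F (fst p) (snd p)) (x, t) ->
  continuous (fun p : R * R => F (snd p) (fst p)) (t, x).
Proof.
  exact (continuous_comp_2 (@snd R R) (@fst R R) F (t, x)
           (continuous_snd t x) (continuous_fst t x)).
Qed.

Lemma filterlim_of_within {T U : Type} {F : (T -> Prop) -> Prop}
  {G : (U -> Prop) -> Prop} {FF : Filter F} (D : T -> Prop) (f : T -> U) :
  F D -> filterlim f (within D F) G -> filterlim f F G.
Proof.
  intros HD Hf P HP; unfold filtermap.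
  apply (filter_imp (fun x => (D x -> P (f x)) /\ D x)); [tauto|].
  exact (filter_and _ _ (Hf P HP : F (fun x => D x -> P (f x))) HD).
Qed.

Lemma continuous_Rabs_extension (F : R -> R -> R) x :
  filterlim (fun p : R * R => F (fst p) (snd p))
    (within (fun p : R * R => 0 <= snd p) (locally (x, 0))) (locally (F x 0)) ->
  continuous (fun p : R * R => F (fst p) (Rabs (snd p))) (x, 0).
Proof.
  intros Hf P HP. simpl in HP. rewrite Rabs_R0 in HP.
  destruct (Hf P HP) as [eps Heps].
  exists eps. intros [y s] [Hy Hs]. simpl in *.
  apply (Heps (y, Rabs s)); [split; simpl; [exact Hy|] | apply Rabs_pos].
  change (Rabs (s - 0) < eps) in Hs. change (Rabs (Rabs s - 0) < eps).
  rewrite Rminus_0_r in *. rewrite Rabs_Rabsolu. exact Hs.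
Qed.

Lemma continuous_of_continuous_within_nonneg_snd (F : R -> R -> R) :
  (forall x t, 0 <= t ->
     filterlim (fun p : R * R => F (fst p) (snd p))
       (within (fun p : R * R => 0 <= snd p) (locally (x, t))) (locally (F x t))) ->
  forall x t, 0 < t -> continuous (fun p : R * R => F (fst p) (snd p)) (x, t).
Proof.
  intros HF x t Ht.
  apply (filterlim_of_within (fun p : R * R => 0 <= snd p)); [|apply HF; simpl; lra].
  apply (filter_imp (fun p : R * R => 0 < snd p)); [intros; lra|].
  exact (continuous_snd x t _ (open_gt 0 t Ht)).
Qed.

Lemma smooth_on_ex_derive_x (U : R -> R -> Prop) f x t :
  smooth_on U f -> U x t -> ex_derive (fun y => f y t) x.
Proof. intros Hf Hxt. exact (proj1 (Hf nil x t Hxt)). Qed.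

Lemma smooth_on_continuous_partial_x (U : R -> R -> Prop) f x t :
  smooth_on U f -> U x t -> continuous (fun y => partial_x f y t) x.
Proof.
  intros Hf Hxt. exact (continuous_slice_fst _ x t (proj2 (proj2 (Hf (cons true nil) x t Hxt)))).
Qed.

Lemma ex_RInt_continuous_on (f : R -> R) a b :
  a <= b -> (forall x, a <= x <= b -> continuous f x) -> ex_RInt f a b.
Proof.
  intros Hab Hf. apply (ex_RInt_continuous (V := R_CompleteNormedModule)).
  rewrite Rmin_left, Rmax_right by exact Hab. exact Hf.
Qed.

Lemma RInt_Rplus (f g : R -> R) a b :
  ex_RInt f a b -> ex_RInt g a b ->
  RInt (fun x => f x + g x) a b = RInt f a b + RInt g a b.
Proof. exact (RInt_plus f g a b). Qed.

Lemma ex_RInt_Rplus (f g : R -> R) a b :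
  ex_RInt f a b -> ex_RInt g a b -> ex_RInt (fun x => f x + g x) a b.
Proof. exact (ex_RInt_plus f g a b). Qed.

Lemma RInt_Rmult_l (f : R -> R) k a b :
  ex_RInt f a b -> RInt (fun x => k * f x) a b = k * RInt f a b.
Proof. exact (RInt_scal f a b k). Qed.

Lemma ex_RInt_Rmult_l (f : R -> R) k a b :
  ex_RInt f a b -> ex_RInt (fun x => k * f x) a b.
Proof. exact (ex_RInt_scal f a b k). Qed.

Lemma le_sqrt_mult_of_AM_GM (I F G : R) : 0 <= F -> 0 <= G ->
  (forall th, 0 < th -> I <= th / 2 * F + G / (2 * th)) -> I <= sqrt F * sqrt G.
Proof.
  intros HF HG H.
  assert (0 <= sqrt F * sqrt G) by (apply Rmult_le_pos; apply sqrt_pos).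
  destruct (Rle_or_lt I 0) as [HI | HI]; [lra|].
  destruct HF as [HF | <-]; destruct HG as [HG | <-].
  - assert (sF := sqrt_lt_R0 F HF). assert (sG := sqrt_lt_R0 G HG).
    specialize (H (sqrt G / sqrt F) ltac:(apply Rdiv_lt_0_compat; auto)).
    rewrite <- (sqrt_sqrt F) in H at 2 by lra. rewrite <- (sqrt_sqrt G) in H at 2 by lra.
    replace (sqrt G / sqrt F / 2 * (sqrt F * sqrt F) + sqrt G * sqrt G / (2 * (sqrt G / sqrt F)))
      with (sqrt F * sqrt G) in H by (field; lra).
    exact H.
  - specialize (H (I / F) ltac:(apply Rdiv_lt_0_compat; auto)).
    replace (I / F / 2 * F + 0 / (2 * (I / F))) with (I / 2) in H by (field; lra). lra.
  - specialize (H (G / I) ltac:(apply Rdiv_lt_0_compat; auto)).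
    replace (G / I / 2 * 0 + G / (2 * (G / I))) with (I / 2) in H by (field; lra). lra.
  - specialize (H 1 Rlt_0_1). lra.
Qed.

Lemma RInt_abs_mult_le (f g : R -> R) a b : a <= b ->
  (forall x, a <= x <= b -> continuous f x) -> (forall x, a <= x <= b -> continuous g x) ->
  RInt (fun x => Rabs (f x) * Rabs (g x)) a b <=
  sqrt (RInt (fun x => f x ^ 2) a b) * sqrt (RInt (fun x => g x ^ 2) a b).
Proof.
  intros Hab Hf Hg.
  assert (If : ex_RInt (fun x => f x ^ 2) a b)
    by (apply ex_RInt_continuous_on; [exact Hab | intros x Hx; split_continuous; auto]).
  assert (Ig : ex_RInt (fun x => g x ^ 2) a b)
    by (apply ex_RInt_continuous_on; [exact Hab | intros x Hx; split_continuous; auto]).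
  apply le_sqrt_mult_of_AM_GM;
    [apply RInt_ge_0; auto; intros; apply pow2_ge_0 ..|].
  intros th Hth.
  replace (th / 2 * RInt (fun x => f x ^ 2) a b + RInt (fun x => g x ^ 2) a b / (2 * th))
    with (th / 2 * RInt (fun x => f x ^ 2) a b + / (2 * th) * RInt (fun x => g x ^ 2) a b)
    by (field; lra).
  rewrite <- !RInt_Rmult_l, <- RInt_Rplus by auto using ex_RInt_Rmult_l.
  apply RInt_le; auto.
  - apply ex_RInt_continuous_on; [exact Hab | intros x Hx; split_continuous; auto].
  - apply ex_RInt_continuous_on; [exact Hab | intros x Hx; split_continuous; auto].
  - intros x _. rewrite <- (pow2_abs (f x)), <- (pow2_abs (g x)).
    assert (0 <= (th * Rabs (f x) - Rabs (g x)) ^ 2 / (2 * th))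
      by (apply Rdiv_le_0_compat; [apply pow2_ge_0 | lra]).
    replace (th / 2 * Rabs (f x) ^ 2 + / (2 * th) * Rabs (g x) ^ 2)
      with (Rabs (f x) * Rabs (g x) + (th * Rabs (f x) - Rabs (g x)) ^ 2 / (2 * th))
      by (field; lra).
    lra.
Qed.

Lemma RInt_derive_periodic (g dg : R -> R) :
  (forall x, is_derive g x (dg x)) -> (forall x, continuous dg x) ->
  (forall x, g (x + 2 * PI) = g x) -> RInt dg (- PI) PI = 0.
Proof.
  intros Hg Hdg Hper.
  rewrite (is_RInt_unique _ _ _ _
             (is_RInt_derive g dg (- PI) PI (fun x _ => Hg x) (fun x _ => Hdg x))).
  change (g PI - g (- PI) = 0).
  replace PI with (- PI + 2 * PI) at 1 by ring. rewrite Hper. ring.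
Qed.

Lemma RInt_param_le_near_0 (F : R -> R -> R) a b : a <= b ->
  (forall x, a <= x <= b ->
     filterlim (fun p : R * R => F (fst p) (snd p))
       (within (fun p : R * R => 0 <= snd p) (locally (x, 0))) (locally (F x 0))) ->
  (forall s, 0 < s -> ex_RInt (fun x => F x s) a b) ->
  exists delta, 0 < delta /\ forall s, 0 < s <= delta ->
    RInt (fun x => F x s) a b <= RInt (fun x => F x 0) a b + (b - a).
Proof.
  intros Hab Hf Hslice.
  (* extending F evenly to s < 0 makes it continuous at (x, 0), so uniform continuity applies *)
  set (G := fun x s => F x (Rabs s)).
  assert (HG : forall x, a <= x <= b -> continuous (fun p : R * R => G (fst p) (snd p)) (x, 0))
    by (intros; apply continuous_Rabs_extension; auto).
  assert (I0 : ex_RInt (fun x => F x 0) a b).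
  { apply ex_RInt_continuous_on; auto. intros x Hx.
    generalize (continuous_slice_fst G x 0 (HG x Hx)). unfold G. rewrite Rabs_R0. easy. }
  destruct (uniform_continuity_2d_1d G a b 0
              (fun x Hx => proj2 (continuity_2d_pt_filterlim G x 0) (HG x Hx))
              (mkposreal 1 Rlt_0_1)) as [delta Hdelta].
  exists delta. split; [apply cond_pos|]. intros s Hs.
  assert (Hsum : RInt (fun x => F x 0 + 1) a b = RInt (fun x => F x 0) a b + (b - a)).
  { rewrite RInt_Rplus by (auto; apply ex_RInt_const).
    rewrite RInt_const. f_equal; apply Rmult_1_r. }
  rewrite <- Hsum. apply RInt_le; [lra | apply Hslice; lra | |].
  - apply ex_RInt_Rplus; [exact I0 | apply ex_RInt_const].
  - intros x Hx.
    specialize (Hdelta x 0 x s ltac:(lra) ltac:(lra) ltac:(lra) ltac:(lra)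
                  ltac:(rewrite Rminus_diag, Rabs_R0; apply cond_pos)).
    unfold G in Hdelta. simpl in Hdelta.
    rewrite Rabs_R0, (Rabs_pos_eq s) in Hdelta by lra.
    apply Rabs_lt_between in Hdelta. lra.
Qed.

Lemma nonincreasing_of_is_derive_nonpos (w dw : R -> R) t0 :
  (forall t, t0 <= t -> is_derive w t (dw t)) -> (forall t, t0 <= t -> dw t <= 0) ->
  forall t, t0 <= t -> w t <= w t0.
Proof.
  intros Hw Hneg t Ht.
  destruct (MVT_gen w t0 t dw) as [c [Hc Hmvt]];
    rewrite ?Rmin_left, ?Rmax_right in * by exact Ht.
  - intros s Hs. apply Hw. lra.
  - intros s Hs. apply continuity_pt_filterlim, (ex_derive_continuous (V := R_NormedModule)).
    exists (dw s). apply Hw. lra.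
  - assert (dw c <= 0) by (apply Hneg; lra). nra.
Qed.

Lemma linear_differential_inequality (phi dphi : R -> R) a K t0 :
  (forall t, t0 <= t -> is_derive phi t (dphi t)) ->
  (forall t, t0 <= t -> dphi t <= - a * phi t + a * K) ->
  forall t, t0 <= t -> phi t <= K + exp (- (a * (t - t0))) * (phi t0 - K).
Proof.
  intros Hphi Hineq t Ht.
  assert (Hw := nonincreasing_of_is_derive_nonpos
    (fun s => exp (a * s) * (phi s - K))
    (fun s => exp (a * s) * (dphi s + a * (phi s - K))) t0).
  assert (Hmono : exp (a * t) * (phi t - K) <= exp (a * t0) * (phi t0 - K)).
  { apply Hw; [| | exact Ht].
    - intros s Hs. auto_derive.
      + exists (dphi s). apply Hphi, Hs.
      + rewrite (is_derive_unique _ s (dphi s)) by apply Hphi, Hs. ring.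
    - intros s Hs. specialize (Hineq s Hs).
      assert (0 < exp (a * s)) by apply exp_pos. nra. }
  assert (Hsplit : exp (a * t0) = exp (- (a * (t - t0))) * exp (a * t))
    by (rewrite <- exp_plus; f_equal; ring).
  rewrite Hsplit in Hmono.
  assert (0 < exp (a * t)) by apply exp_pos.
  nra.
Qed.

Lemma le_Rmax_of_linear_differential_inequality (phi dphi : R -> R) a K t0 : 0 <= a ->
  (forall t, t0 <= t -> is_derive phi t (dphi t)) ->
  (forall t, t0 <= t -> dphi t <= - a * phi t + a * K) ->
  forall t, t0 <= t -> phi t <= Rmax (phi t0) K.
Proof.
  intros Ha Hphi Hineq t Ht.
  assert (Hdecay := linear_differential_inequality phi dphi a K t0 Hphi Hineq t Ht).
  assert (0 < exp (- (a * (t - t0)))) by apply exp_pos.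
  assert (exp (- (a * (t - t0))) <= 1).
  { assert (1 <= exp (a * (t - t0))) by (generalize (exp_ineq1_le (a * (t - t0))); nra).
    rewrite exp_Ropp, <- Rinv_1. apply Rinv_le_contravar; lra. }
  unfold Rmax. destruct Rle_dec; nra.
Qed.

Lemma pow2_sqrt_le_Rmax (x : R) : sqrt x ^ 2 <= Rmax x 0.
Proof.
  destruct (Rle_or_lt 0 x) as [Hx | Hx].
  - rewrite pow2_sqrt by exact Hx. apply Rmax_l.
  - rewrite sqrt_neg_0 by lra. simpl. rewrite Rmult_0_l. apply Rmax_r.
Qed.

Lemma limsup_le_weaken (g : R -> R) c c' : c <= c' -> limsup_le g c -> limsup_le g c'.
Proof.
  intros Hc Hg eps Heps. destruct (Hg eps Heps) as [T HT].
  exists T. intros t Ht. specialize (HT t Ht). lra.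
Qed.

Lemma bounded_of_linear_differential_inequality (phi dphi : R -> R) a K delta B0 :
  0 <= a -> 0 < delta ->
  (forall t, 0 < t -> is_derive phi t (dphi t)) ->
  (forall t, 0 < t -> dphi t <= - a * phi t + a * K) ->
  (forall s, 0 <= s <= delta -> phi s <= B0) ->
  forall t, 0 <= t -> phi t <= Rmax B0 K.
Proof.
  intros Ha Hdelta Hphi Hineq Hinit t Ht.
  destruct (Rle_or_lt t delta) as [Htd | Htd].
  - eapply Rle_trans; [apply Hinit; lra | apply Rmax_l].
  - eapply Rle_trans.
    + apply (le_Rmax_of_linear_differential_inequality phi dphi a K delta Ha);
        [intros; apply Hphi; lra | intros; apply Hineq; lra | lra].
    + apply Rle_max_compat_r, Hinit. lra.
Qed.

Lemma exp_neg_le_inv (u : R) : 0 < u -> exp (- u) <= / u.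
Proof.
  intros Hu. rewrite exp_Ropp. apply Rinv_le_contravar; [exact Hu|].
  generalize (exp_ineq1_le u). lra.
Qed.

Lemma exp_decay_eventually_le (a c eps t0 : R) : 0 < a -> 0 < eps ->
  exists T, forall t, T <= t -> exp (- (a * (t - t0))) * c <= eps.
Proof.
  intros Ha Heps.
  set (m := Rmax c 0).
  exists (t0 + (m + 1) / (eps * a)). intros t Ht.
  set (u := a * (t - t0)).
  assert (Hu : m + 1 <= eps * u).
  { replace (m + 1) with (eps * a * ((m + 1) / (eps * a))) by (field; lra).
    unfold u. rewrite <- Rmult_assoc.
    apply Rmult_le_compat_l; [nra | lra]. }
  assert (Hm : 0 <= m) by apply Rmax_r.
  assert (Hupos : 0 < u) by nra.
  apply Rle_trans with (exp (- u) * m).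
  { apply Rmult_le_compat_l; [left; apply exp_pos | apply Rmax_l]. }
  apply Rle_trans with (/ u * m).
  { apply Rmult_le_compat_r; [exact Hm | apply exp_neg_le_inv, Hupos]. }
  apply (Rmult_le_reg_l u); [exact Hupos|].
  replace (u * (/ u * m)) with m by (field; lra). lra.
Qed.

Lemma limsup_sqrt_le_of_linear_differential_inequality (phi dphi : R -> R) a z t0 :
  0 < a -> 0 <= z ->
  (forall t, t0 <= t -> is_derive phi t (dphi t)) ->
  (forall t, t0 <= t -> dphi t <= - a * phi t + a * z ^ 2) ->
  limsup_le (fun t => sqrt (phi t)) z.
Proof.
  intros Ha Hz Hphi Hineq eps Heps.
  destruct (exp_decay_eventually_le a (phi t0 - z ^ 2) ((z + eps) ^ 2 - z ^ 2) t0 Ha)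
    as [T HT]; [nra|].
  exists (Rmax T t0). intros t Ht.
  assert (HTt : T <= t) by (eapply Rle_trans; [apply Rmax_l | exact Ht]).
  assert (Ht0 : t0 <= t) by (eapply Rle_trans; [apply Rmax_r | exact Ht]).
  assert (Hphit := linear_differential_inequality phi dphi a (z ^ 2) t0 Hphi Hineq t Ht0).
  specialize (HT t HTt).
  rewrite <- (sqrt_pow2 (z + eps)) by lra.
  apply sqrt_le_1_alt. lra.
Qed.

Lemma sqrt_bounded_limsup_of_linear_differential_inequality (phi dphi : R -> R) a z delta B0 :
  0 < a -> 0 <= z -> 0 < delta ->
  (forall t, 0 < t -> is_derive phi t (dphi t)) ->
  (forall t, 0 < t -> dphi t <= - a * phi t + a * z ^ 2) ->
  (forall s, 0 <= s <= delta -> phi s <= B0) ->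
  (exists B, forall t, 0 <= t -> sqrt (phi t) ^ 2 <= B) /\ limsup_le (fun t => sqrt (phi t)) z.
Proof.
  intros Ha Hz Hdelta Hphi Hineq Hinit. split.
  - exists (Rmax (Rmax B0 (z ^ 2)) 0). intros t Ht.
    eapply Rle_trans; [apply pow2_sqrt_le_Rmax|].
    apply Rle_max_compat_r.
    apply (bounded_of_linear_differential_inequality phi dphi a (z ^ 2) delta); auto; lra.
  - apply (limsup_sqrt_le_of_linear_differential_inequality phi dphi a z 1); auto;
      intros; [apply Hphi | apply Hineq]; lra.
Qed.

Lemma energy_density_le (Kp D1 D2 u ux r rx dd ddx : R) :
  Rabs dd <= D1 -> Rabs ddx <= D2 ->
  2 * u * (- Kp * u + ((rx - ux) * dd + (r - u) * ddx)) + (2 * u * ux * dd + u ^ 2 * ddx)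
  <= - (2 * Kp - D2) * u ^ 2 + 2 * D1 * (Rabs u * Rabs rx) + 2 * D2 * (Rabs u * Rabs r).
Proof.
  intros Hdd Hddx.
  assert (u * rx * dd <= Rabs u * Rabs rx * D1).
  { eapply Rle_trans; [apply Rle_abs|]. rewrite !Rabs_mult.
    apply Rmult_le_compat_l; [apply Rmult_le_pos; apply Rabs_pos | exact Hdd]. }
  assert (u * r * ddx <= Rabs u * Rabs r * D2).
  { eapply Rle_trans; [apply Rle_abs|]. rewrite !Rabs_mult.
    apply Rmult_le_compat_l; [apply Rmult_le_pos; apply Rabs_pos | exact Hddx]. }
  assert (- (u ^ 2 * ddx) <= u ^ 2 * D2).
  { assert (0 <= u ^ 2) by apply pow2_ge_0.
    assert (- ddx <= D2) by (apply Rabs_le_between in Hddx; lra). nra. }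
  lra.
Qed.

Lemma neg_quadratic_le (A C y : R) : 0 < A ->
  - A * y ^ 2 + 2 * C * y <= - (A / 2) * y ^ 2 + A / 2 * (2 * C / A) ^ 2.
Proof.
  intros HA.
  assert (0 <= A / 2 * (y - 2 * C / A) ^ 2) by (apply Rmult_le_pos; [lra | apply pow2_ge_0]).
  assert (- (A / 2) * y ^ 2 + A / 2 * (2 * C / A) ^ 2 - (- A * y ^ 2 + 2 * C * y)
          = A / 2 * (y - 2 * C / A) ^ 2) by (field; lra).
  lra.
Qed.

Definition energy (u : R -> R -> R) (t : R) : R := RInt (fun x => u x t ^ 2) (- PI) PI.

Section ErrorEnergy.

Variables (rhod d e : R -> R -> R) (M L D1 D2 Kp : R).

Hypothesis e_cont : forall x t, 0 < t -> continuous (fun p : R * R => e (fst p) (snd p)) (x, t).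
Hypothesis e_dx : forall x t, 0 < t -> ex_derive (fun y => e y t) x.
Hypothesis e_dt : forall x t, 0 < t -> ex_derive (fun s => e x s) t.
Hypothesis e_dx_cont : forall x t, 0 < t ->
  continuous (fun p : R * R => partial_x e (fst p) (snd p)) (x, t).
Hypothesis e_dt_cont : forall x t, 0 < t ->
  continuous (fun p : R * R => partial_t e (fst p) (snd p)) (x, t).
Hypothesis rho_dx : forall x t, 0 < t -> ex_derive (fun y => rhod y t) x.
Hypothesis rho_dx_cont : forall x t, 0 < t -> continuous (fun y => partial_x rhod y t) x.
Hypothesis d_dx : forall x t, 0 <= t -> ex_derive (fun y => d y t) x.
Hypothesis d_dx_cont : forall x t, 0 <= t -> continuous (fun y => partial_x d y t) x.
Hypothesis e_per : periodic_x e.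
Hypothesis d_per : periodic_x d.
Hypothesis rho_L2 : forall t, 0 <= t -> norm2 (fun x => rhod x t) <= M.
Hypothesis rho_dx_L2 : forall t, 0 <= t -> norm2 (fun x => partial_x rhod x t) <= L.
Hypothesis d_bound : forall x t, 0 <= t -> - PI <= x <= PI -> Rabs (d x t) <= D1.
Hypothesis d_dx_bound : forall x t, 0 <= t -> - PI <= x <= PI -> Rabs (partial_x d x t) <= D2.
Hypothesis e_pde : forall x t, 0 < t ->
  partial_t e x t = - Kp * e x t + Derive (fun y => (rhod y t - e y t) * d y t) x.

Lemma continuous_e_x x t : 0 < t -> continuous (fun y => e y t) x.
Proof. intros Ht. apply (ex_derive_continuous (V := R_NormedModule)), e_dx, Ht. Qed.

Lemma continuous_rho_x x t : 0 < t -> continuous (fun y => rhod y t) x.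
Proof. intros Ht. apply (ex_derive_continuous (V := R_NormedModule)), rho_dx, Ht. Qed.

Lemma continuous_d_x x t : 0 < t -> continuous (fun y => d y t) x.
Proof. intros Ht. apply (ex_derive_continuous (V := R_NormedModule)), d_dx. lra. Qed.

Lemma ex_RInt_e_sq t : 0 < t -> ex_RInt (fun x => e x t ^ 2) (- PI) PI.
Proof.
  intros Ht. apply ex_RInt_continuous_on; [generalize PI_RGT_0; lra|].
  intros x _. apply continuous_Rpow2_comp, continuous_e_x, Ht.
Qed.

Lemma energy_nonneg t : 0 < t -> 0 <= energy e t.
Proof.
  intros Ht. apply RInt_ge_0; [generalize PI_RGT_0; lra | apply ex_RInt_e_sq, Ht |].
  intros; apply pow2_ge_0.
Qed.

Lemma energy_is_derive t : 0 < t ->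
  is_derive (energy e) t (RInt (fun x => 2 * e x t * partial_t e x t) (- PI) PI).
Proof.
  intros Ht.
  assert (Hpos : locally t (fun s => 0 < s)) by exact (open_gt 0 t Ht).
  assert (Dsq : forall x s, 0 < s ->
            is_derive (fun z => e x z ^ 2) s (2 * e x s * partial_t e x s)).
  { intros x s Hs. auto_derive; [apply e_dt, Hs | unfold partial_t; ring]. }
  rewrite (RInt_ext _ (fun x => Derive (fun s => e x s ^ 2) t))
    by (intros; symmetry; apply is_derive_unique, Dsq, Ht).
  apply (is_derive_RInt_param (fun s x => e x s ^ 2)).
  - apply (filter_imp _ _ (fun s Hs x _ => ex_intro _ _ (Dsq x s Hs)) Hpos).
  - intros x _. apply continuity_2d_pt_filterlim.
    change (continuous (fun p : R * R => Derive (fun s => e (snd p) s ^ 2) (fst p)) (t, x)).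
    apply (continuous_ext_loc _
             (fun p : R * R => 2 * e (snd p) (fst p) * partial_t e (snd p) (fst p))).
    + apply (filter_imp (fun p : R * R => 0 < fst p)); [|exact (continuous_fst t x _ Hpos)].
      intros p Hp. symmetry. apply is_derive_unique, Dsq, Hp.
    + apply continuous_Rmult_comp; [apply continuous_Rmult_comp; [apply continuous_const|]|];
        apply (continuous_swap _ x t); auto.
  - apply (filter_imp _ _ (fun s Hs => ex_RInt_e_sq s Hs) Hpos).
Qed.

Lemma RInt_flux_zero t : 0 < t ->
  RInt (fun x => 2 * e x t * partial_x e x t * d x t + e x t ^ 2 * partial_x d x t) (- PI) PI = 0.
Proof.
  intros Ht. assert (Ht0 : 0 <= t) by lra.
  apply (RInt_derive_periodic (fun y => e y t ^ 2 * d y t)).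
  - intros x. auto_derive; [auto | unfold partial_x; ring].
  - intros x. split_continuous; auto using continuous_e_x, continuous_d_x, continuous_slice_fst.
  - intros x. rewrite e_per, d_per. reflexivity.
Qed.

Lemma partial_t_e_expand x t : 0 < t ->
  partial_t e x t = - Kp * e x t
    + ((partial_x rhod x t - partial_x e x t) * d x t + (rhod x t - e x t) * partial_x d x t).
Proof.
  intros Ht. assert (Ht0 : 0 <= t) by lra.
  rewrite e_pde by exact Ht. f_equal.
  apply is_derive_unique. auto_derive; [auto | unfold partial_x; ring].
Qed.

Lemma energy_dissipation t : 0 < t ->
  RInt (fun x => 2 * e x t * partial_t e x t) (- PI) PI
  <= - (2 * Kp - D2) * energy e t + 2 * (L * D1 + M * D2) * sqrt (energy e t).
Proof.
  intros Ht.
  assert (HPI : - PI <= PI) by (generalize PI_RGT_0; lra).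
  assert (Hint : forall f, (forall x, continuous f x) -> ex_RInt f (- PI) PI)
    by (intros f Hf; apply ex_RInt_continuous_on; auto).
  assert (ce := fun x => continuous_e_x x t Ht).
  assert (cex := fun x => continuous_slice_fst _ x t (e_dx_cont x t Ht)).
  assert (cet := fun x => continuous_slice_fst _ x t (e_dt_cont x t Ht)).
  assert (cr := fun x => continuous_rho_x x t Ht).
  assert (crx := fun x => rho_dx_cont x t Ht).
  assert (cd := fun x => continuous_d_x x t Ht).
  assert (cdx := fun x => d_dx_cont x t (Rlt_le _ _ Ht)).
  set (flux := fun x => 2 * e x t * partial_x e x t * d x t + e x t ^ 2 * partial_x d x t).
  set (I1 := RInt (fun x => Rabs (e x t) * Rabs (partial_x rhod x t)) (- PI) PI).
  set (I2 := RInt (fun x => Rabs (e x t) * Rabs (rhod x t)) (- PI) PI).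
  assert (Hadd_flux : RInt (fun x => 2 * e x t * partial_t e x t) (- PI) PI
                      = RInt (fun x => 2 * e x t * partial_t e x t + flux x) (- PI) PI).
  { rewrite RInt_Rplus by (apply Hint; intros; unfold flux; split_continuous; auto).
    unfold flux. rewrite RInt_flux_zero by exact Ht. symmetry; apply Rplus_0_r. }
  assert (Hbound : RInt (fun x => 2 * e x t * partial_t e x t + flux x) (- PI) PI
                   <= - (2 * Kp - D2) * energy e t + 2 * D1 * I1 + 2 * D2 * I2).
  { set (f1 := fun x => e x t ^ 2).
    set (f2 := fun x => Rabs (e x t) * Rabs (partial_x rhod x t)).
    set (f3 := fun x => Rabs (e x t) * Rabs (rhod x t)).
    assert (I1c : ex_RInt f1 (- PI) PI) by (apply Hint; intros; unfold f1; split_continuous; auto).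
    assert (I2c : ex_RInt f2 (- PI) PI) by (apply Hint; intros; unfold f2; split_continuous; auto).
    assert (I3c : ex_RInt f3 (- PI) PI) by (apply Hint; intros; unfold f3; split_continuous; auto).
    assert (Hlin : RInt (fun x => - (2 * Kp - D2) * f1 x + 2 * D1 * f2 x + 2 * D2 * f3 x) (- PI) PI
                   = - (2 * Kp - D2) * energy e t + 2 * D1 * I1 + 2 * D2 * I2).
    { rewrite RInt_Rplus, RInt_Rplus, !RInt_Rmult_l by
        (auto using ex_RInt_Rmult_l, ex_RInt_Rplus).
      reflexivity. }
    rewrite <- Hlin.
    apply RInt_le; [exact HPI | apply Hint; intros; unfold flux; split_continuous; auto
                   | apply Hint; intros; unfold f1, f2, f3; split_continuous; auto |].
    intros x Hx. unfold flux, f1, f2, f3. rewrite partial_t_e_expand by exact Ht.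
    apply energy_density_le; [apply d_bound | apply d_dx_bound]; lra. }
  assert (HI1 : I1 <= sqrt (energy e t) * L).
  { eapply Rle_trans; [apply RInt_abs_mult_le; auto|].
    apply Rmult_le_compat_l; [apply sqrt_pos | apply rho_dx_L2; lra]. }
  assert (HI2 : I2 <= sqrt (energy e t) * M).
  { eapply Rle_trans; [apply RInt_abs_mult_le; auto|].
    apply Rmult_le_compat_l; [apply sqrt_pos | apply rho_L2; lra]. }
  assert (0 <= D1) by (eapply Rle_trans; [apply Rabs_pos | apply (d_bound 0 t); lra]).
  assert (0 <= D2) by (eapply Rle_trans; [apply Rabs_pos | apply (d_dx_bound 0 t); lra]).
  nra.
Qed.

Lemma energy_linear_differential_inequality t : 0 < 2 * Kp - D2 -> 0 < t ->
  RInt (fun x => 2 * e x t * partial_t e x t) (- PI) PI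
  <= - ((2 * Kp - D2) / 2) * energy e t
     + (2 * Kp - D2) / 2 * (2 * (L * D1 + M * D2) / (2 * Kp - D2)) ^ 2.
Proof.
  intros HA Ht.
  eapply Rle_trans; [apply energy_dissipation, Ht|].
  assert (HE : energy e t = sqrt (energy e t) ^ 2)
    by (rewrite pow2_sqrt; [reflexivity | apply energy_nonneg, Ht]).
  rewrite HE at 1 3. apply neg_quadratic_le, HA.
Qed.

End ErrorEnergy.

Lemma energy_le_near_0 (e : R -> R -> R) :
  (forall x t, 0 <= t ->
     filterlim (fun p : R * R => e (fst p) (snd p))
       (within (fun p : R * R => 0 <= snd p) (locally (x, t))) (locally (e x t))) ->
  (forall x t, 0 < t -> ex_derive (fun y => e y t) x) ->
  exists delta B0, 0 < delta /\ forall s, 0 <= s <= delta -> energy e s <= B0.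
Proof.
  intros He_cont He_dx.
  assert (HPI := PI_RGT_0).
  destruct (RInt_param_le_near_0 (fun x s => e x s ^ 2) (- PI) PI) as [delta [Hdelta Hnear]].
  - lra.
  - intros x _.
    apply (filterlim_comp _ _ _ (fun p : R * R => e (fst p) (snd p)) (fun y => y ^ 2) _
             (locally (e x 0))); [apply He_cont; lra|].
    apply (continuous_Rpow2_comp (fun y => y)), continuous_id.
  - intros s Hs. apply ex_RInt_e_sq; assumption.
  - exists delta, (energy e 0 + (PI - - PI)). split; [exact Hdelta|].
    intros s [[Hs | <-] Hsd]; [apply Hnear; lra | lra].
Qed.
Theorem theorem2
  (rhod d e : R -> R -> R) (M L D1 D2 Kp : R)
  (* desired density: smooth, nonnegative, periodic, with L^2 bounds *)
  (Hrho_smooth : smooth_on (fun _ t => 0 < t) rhod)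
  (Hrho_nonneg : forall x t, 0 <= t -> 0 <= rhod x t)
  (Hrho_per : periodic_x rhod)
  (HM : forall t, 0 <= t -> norm2 (fun x => rhod x t) <= M)
  (HL : forall t, 0 <= t -> norm2 (fun x => partial_x rhod x t) <= L)
  (* perturbation d: periodic, C^1 in x, with sup bounds *)
  (Hd_per : periodic_x d)
  (Hd_dx : forall x t, 0 <= t -> ex_derive (fun y => d y t) x)
  (Hd_dx_cont : forall x t, 0 <= t -> continuous (fun y => partial_x d y t) x)
  (HD1pos : 0 < D1) (HD2pos : 0 < D2)
  (HD1 : forall x t, 0 <= t -> - PI <= x <= PI -> Rabs (d x t) <= D1)
  (HD2 : forall x t, 0 <= t -> - PI <= x <= PI -> Rabs (partial_x d x t) <= D2)
  (HKp : 0 < Kp)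
  (* e: x-periodic classical solution of the error equation *)
  (He_per : periodic_x e)
  (He_cont : forall x t, 0 <= t ->
     filterlim (fun p : R * R => e (fst p) (snd p))
       (within (fun p : R * R => 0 <= snd p) (locally (x, t))) (locally (e x t)))
  (He_dx : forall x t, 0 < t -> ex_derive (fun y => e y t) x)
  (He_dt : forall x t, 0 < t -> ex_derive (fun s => e x s) t)
  (He_dx_cont : forall x t, 0 < t ->
     continuous (fun p : R * R => partial_x e (fst p) (snd p)) (x, t))
  (He_dt_cont : forall x t, 0 < t ->
     continuous (fun p : R * R => partial_t e (fst p) (snd p)) (x, t))
  (He_pde : forall x t, 0 < t ->
     partial_t e x t =
       - Kp * e x t + Derive (fun y => (rhod y t - e y t) * d y t) x) :
  forall kappa : R, D2 < kappa -> 2 * Kp > kappa ->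
    (exists B : R, forall t, 0 <= t -> (norm2 (fun x => e x t)) ^ 2 <= B) /\
    limsup_le (fun t => norm2 (fun x => e x t))
      ((2 * L * D1 + 2 * M * D2) / (kappa - D2)).
Proof.
  intros kappa Hk1 Hk2.
  set (A := 2 * Kp - D2). set (z := 2 * (L * D1 + M * D2) / A).
  assert (HA : 0 < A) by (unfold A; lra).
  assert (Hz : 0 <= z).
  { assert (0 <= L) by (eapply Rle_trans; [apply sqrt_pos | apply (HL 0); lra]).
    assert (0 <= M) by (eapply Rle_trans; [apply sqrt_pos | apply (HM 0); lra]).
    apply Rdiv_le_0_compat; nra. }
  assert (e_cont := continuous_of_continuous_within_nonneg_snd e He_cont).
  assert (rho_dx := fun x t => smooth_on_ex_derive_x _ rhod x t Hrho_smooth).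
  assert (rho_dx_cont := fun x t => smooth_on_continuous_partial_x _ rhod x t Hrho_smooth).
  destruct (energy_le_near_0 e He_cont He_dx) as [delta [B0 [Hdelta Hinit]]].
  destruct (sqrt_bounded_limsup_of_linear_differential_inequality (energy e)
              (fun t => RInt (fun x => 2 * e x t * partial_t e x t) (- PI) PI)
              (A / 2) z delta B0) as [Hbounded Hlimsup];
    [lra | exact Hz | exact Hdelta
    | intros t Ht; apply energy_is_derive; assumption
    | intros t Ht; apply (energy_linear_differential_inequality rhod d e M L D1 D2 Kp); assumption
    | exact Hinit |].
  split; [exact Hbounded|].
  apply (limsup_le_weaken _ z); [|exact Hlimsup].
  replace (2 * L * D1 + 2 * M * D2) with (z * A) by (unfold z; field; lra).
  apply (Rmult_le_reg_r (kappa - D2)); [lra|].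
  unfold Rdiv. rewrite Rmult_assoc, Rinv_l, Rmult_1_r by lra.
  apply Rmult_le_compat_l; [exact Hz | unfold A; lra].
Qed.
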